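(* For every real $x\ge 2$, $$\frac{x}{\zeta(2)}-\log x\;\le\;\sum_{n\le x}\frac{\varphi(n)}{n}\;\le\;\frac{x}{\zeta(2)}+\log x .$$
   Context: $\varphi$ is Euler's totient function, $\zeta$ is the Riemann zeta function (so $\zeta(2)=\pi^2/6$), $\log$ is the natural logarithm, and the sum runs over positive integers $n\le x$. *)

From Stdlib Require Import Reals ZArith.
From mathcomp Require Import all_boot.
Open Scope R_scope.

Definition zeta2 : R := PI ^ 2 / 6.

(* floor of a real as a natural number (x >= 0 intended) *)
Definition nat_floor (x : R) : nat := Z.to_nat (Int_part x).

Fixpoint phi_over_n_sum (N : nat) : R :=
  match N with
  | O => 0
  | S m => phi_over_n_sum m + INR (totient (S m)) / INR (S m)
  end.

Definition sum_phi_over_n (x : R) : R := phi_over_n_sum (nat_floor x).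

(* With mu the Moebius function, phi(n)/n = sum_{d | n} mu(d)/d, hence
   S(N) = sum_{d <= N} mu(d)/d * floor(N/d); in the same way
   sum_{d <= N} mu(d)/d^2 * H2(floor(N/d)) = 1, where H2(k) = sum_{e <= k} 1/e^2.
   Multiplying the latter by x/zeta(2) and subtracting gives, with y = x/d and k = floor(y),
     S(N) - x/zeta(2) = sum_{d <= N} mu(d)/d * (k - y + y (zeta(2) - H2(k)) / zeta(2)).
   The tail bounds 1/(k+1) <= zeta(2) - H2(k) <= 1/k keep each bracket within 1/zeta(2)
   in absolute value, so, with H(N) = sum_{d <= N} 1/d,
   |S(N) - x/zeta(2)| <= H(N)/zeta(2) <= H(N) - 1 <= ln N once N >= 7;
   the cases 2 <= N <= 6 are checked numerically.
   The tail bounds come from Matsuoka's proof of zeta(2) = pi^2/6: for A_m = int_0^{pi/2} cos^{2m}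
   and B_m = int_0^{pi/2} t^2 cos^{2m}, integration by parts gives E_m - E_{m+1} = 1/(m+1)^2 for
   E_m = 2 B_m / A_m, and sin t >= t/2 gives 0 <= E_m <= 4/(m+1); hence E_m = zeta(2) - H2(m),
   and comparing 1/e^2 with 1/e - 1/(e+1) and 1/(e-1) - 1/e yields the bounds. *)

From Stdlib Require Import Reals ZArith Lra Nsatz.
From Coquelicot Require Coquelicot.
From HB Require Import structures.
From mathcomp Require Import all_boot.
Open Scope R_scope.

HB.instance Definition _ := Monoid.isComLaw.Build R 0 Rplus
  (fun a b c => esym (Rplus_assoc a b c)) Rplus_comm Rplus_0_l.
HB.instance Definition _ := Monoid.isMulLaw.Build R 0 Rmult Rmult_0_l Rmult_0_r.
HB.instance Definition _ := Monoid.isAddLaw.Build R Rmult Rplus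
  Rmult_plus_distr_r Rmult_plus_distr_l.

Definition partial_sum (F : nat -> R) (n : nat) : R := \big[Rplus/0]_(1 <= i < n.+1) F i.

Lemma partial_sum0 F : partial_sum F 0 = 0.
Proof. by rewrite /partial_sum big_geq. Qed.

Lemma partial_sumS F n : partial_sum F n.+1 = partial_sum F n + F n.+1.
Proof. by rewrite /partial_sum big_nat_recr. Qed.

Definition harmonic (n : nat) : R := partial_sum (fun i => / INR i) n.
Definition harmonic2 (n : nat) : R := partial_sum (fun i => / INR i ^ 2) n.

Lemma INR_gt0 n : (0 < n)%N -> 0 < INR n.
Proof. by move=> n0; apply: lt_0_INR; apply/ltP. Qed.

Lemma Rle_of_forall_le_add_div (a b c : R) (k : nat) :
  (forall j, a <= b + c / INR (k + j).+1) -> a <= b.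
Proof.
move=> h; apply: Rnot_lt_le => hba.
have [j hj] := INR_unbounded (c / (a - b)).
have hj' : INR j < INR (k + j).+1 by apply: lt_INR; apply/ltP; rewrite ltnS leq_addl.
have hN : 0 < INR (k + j).+1 by have := pos_INR j; lra.
have : c / INR (k + j).+1 < a - b.
  apply: (Rmult_lt_reg_r (INR (k + j).+1)) => //.
  rewrite /Rdiv Rmult_assoc Rinv_l; last lra.
  have : c / (a - b) * (a - b) = c by field; lra.
  nra.
have := h j; lra.
Qed.

Lemma PI_bounds : 3.1415 < PI < 3.1417.
Proof.
have [] := PI_2_3_7_ineq 2.
rewrite /tg_alt /PI_2_3_7_tg /Ratan_seq /=; lra.
Qed.

Lemma sin_ge_half t : 0 <= t <= PI / 2 -> t / 2 <= sin t.
Proof.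
move=> ht; have [_ hPI] := PI_bounds.
have [+ _] := sin_bound t 0 ltac:(lra) ltac:(lra).
rewrite /sin_approx /sin_term /=.
have ht1 : t <= 1.6 by lra.
have ht2 : t * t <= 3 by nra.
nra.
Qed.

Module Basel.
Import Coquelicot.Coquelicot.

Lemma is_RInt_RInt (f : R -> R) (a b : R) :
  (forall t, ex_derive f t) -> is_RInt f a b (RInt f a b).
Proof.
move=> df; apply: (RInt_correct (V := R_CompleteNormedModule)).
apply: (ex_RInt_continuous (V := R_CompleteNormedModule)) => t _.
exact: (ex_derive_continuous (K := R_AbsRing) (V := R_NormedModule)).
Qed.

Definition wallis (m : nat) : R := RInt (fun t => cos t ^ (2 * m)) 0 (PI / 2).
Definition wallis2 (m : nat) : R := RInt (fun t => t ^ 2 * cos t ^ (2 * m)) 0 (PI / 2).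

Lemma is_RInt_wallis m : is_RInt (fun t => cos t ^ (2 * m)) 0 (PI / 2) (wallis m).
Proof. by apply: is_RInt_RInt => t; auto_derive. Qed.

Lemma is_RInt_wallis2 m :
  is_RInt (fun t => t ^ 2 * cos t ^ (2 * m)) 0 (PI / 2) (wallis2 m).
Proof. by apply: is_RInt_RInt => t; auto_derive. Qed.

Lemma is_derive_sin_cos_pow n t :
  is_derive (fun t => sin t * cos t ^ n.+1) t
    (INR n.+2 * cos t ^ n.+2 - INR n.+1 * cos t ^ n).
Proof.
auto_derive => //.
rewrite -/(INR n.+1) !S_INR /=.
have := sin2_cos2 t; rewrite /Rsqr.
nsatz.
Qed.

Lemma RInt_derive_eq (F f : R -> R) (a b I : R) :
  is_RInt f a b I -> (forall t, is_derive F t (f t)) ->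
  (forall t, ex_derive f t) -> I = F b - F a.
Proof.
move=> hI dF df; rewrite -(is_RInt_unique (V := R_CompleteNormedModule) _ _ _ _ hI).
apply: (is_RInt_unique (V := R_CompleteNormedModule)).
apply: (is_RInt_derive (V := R_CompleteNormedModule)) => t _; first exact: dF.
exact: (ex_derive_continuous (K := R_AbsRing) (V := R_NormedModule)).
Qed.

Lemma cos_PI2_pow n : cos (PI / 2) ^ n.+1 = 0.
Proof. by rewrite cos_PI2 /= Rmult_0_l. Qed.

Lemma wallisS m : wallis m.+1 = (2 * INR m + 1) / (2 * INR m + 2) * wallis m.
Proof.
have hI : is_RInt (fun t => INR (2 * m).+2 * cos t ^ (2 * m).+2 - INR (2 * m).+1 * cos t ^ (2 * m))
    0 (PI / 2) (INR (2 * m).+2 * wallis m.+1 - INR (2 * m).+1 * wallis m).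
  apply: (is_RInt_minus (V := R_CompleteNormedModule));
    apply: (is_RInt_scal (V := R_CompleteNormedModule)); last exact: is_RInt_wallis.
  by rewrite -add2n -mulnS; exact: is_RInt_wallis.
have := RInt_derive_eq _ _ _ _ _ hI (is_derive_sin_cos_pow _) (fun t => ltac:(by auto_derive)).
rewrite cos_PI2_pow sin_0 !S_INR mult_INR /= => h.
have hm := pos_INR m; apply: (Rmult_eq_reg_l (2 * INR m + 2)); last lra.
have -> : (2 * INR m + 2) * wallis m.+1 = (2 * INR m + 1) * wallis m by lra.
by field; lra.
Qed.

Lemma is_derive_wallis2_primitive n t :
  is_derive (fun t => 2 * t * cos t ^ n.+2 + INR n.+2 * t ^ 2 * sin t * cos t ^ n.+1) t
    (2 * cos t ^ n.+2 + INR n.+2 ^ 2 * (t ^ 2 * cos t ^ n.+2)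
     - INR n.+2 * INR n.+1 * (t ^ 2 * cos t ^ n)).
Proof.
auto_derive => //; rewrite -/(INR n.+1) !S_INR /=.
have := sin2_cos2 t; rewrite /Rsqr.
nsatz.
Qed.

Lemma wallis2S m :
  wallis m.+1 + 2 * INR m.+1 ^ 2 * wallis2 m.+1 = INR m.+1 * (2 * INR m + 1) * wallis2 m.
Proof.
have hI : is_RInt (fun t => 2 * cos t ^ (2 * m).+2 + INR (2 * m).+2 ^ 2 * (t ^ 2 * cos t ^ (2 * m).+2)
     - INR (2 * m).+2 * INR (2 * m).+1 * (t ^ 2 * cos t ^ (2 * m))) 0 (PI / 2)
    (2 * wallis m.+1 + INR (2 * m).+2 ^ 2 * wallis2 m.+1
     - INR (2 * m).+2 * INR (2 * m).+1 * wallis2 m).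
  rewrite -add2n -mulnS.
  apply: (is_RInt_minus (V := R_CompleteNormedModule)); last first.
    exact: (is_RInt_scal (V := R_CompleteNormedModule)) (is_RInt_wallis2 _).
  apply: (is_RInt_plus (V := R_CompleteNormedModule));
    apply: (is_RInt_scal (V := R_CompleteNormedModule)).
    exact: is_RInt_wallis.
  exact: is_RInt_wallis2.
have := RInt_derive_eq _ _ _ _ _ hI (is_derive_wallis2_primitive _)
  (fun t => ltac:(by auto_derive)).
rewrite !cos_PI2_pow sin_0 !S_INR mult_INR /=.
lra.
Qed.

Lemma wallis0 : wallis 0 = PI / 2.
Proof.
have := RInt_derive_eq (fun t => t) _ 0 (PI / 2) _ (is_RInt_wallis 0)
  (fun t => ltac:(auto_derive; reflexivity)) (fun t => ltac:(by auto_derive)).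
lra.
Qed.

Lemma wallis2_0 : wallis2 0 = PI ^ 3 / 24.
Proof.
have := RInt_derive_eq (fun t => t ^ 3 / 3) _ 0 (PI / 2) _ (is_RInt_wallis2 0)
  (fun t => ltac:(by auto_derive => //=; field)) (fun t => ltac:(by auto_derive)).
move=> ->; field.
Qed.

Lemma wallis_gt0 m : 0 < wallis m.
Proof.
elim: m => [|m IH]; first by rewrite wallis0; have := PI_RGT_0; lra.
rewrite wallisS; have := pos_INR m => hm.
by apply: Rmult_lt_0_compat => //; apply: Rdiv_lt_0_compat; lra.
Qed.

Lemma wallis2_ge0 m : 0 <= wallis2 m.
Proof.
apply: RInt_ge_0; first by have := PI_RGT_0; lra.
  by exists (wallis2 m); exact: is_RInt_wallis2.
move=> t ht; apply: Rmult_le_pos; first exact: pow2_ge_0.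
by rewrite pow_mult; apply: pow_le; apply: pow2_ge_0.
Qed.

Lemma wallis2_le m : wallis2 m <= 4 * (wallis m - wallis m.+1).
Proof.
have hI : is_RInt (fun t => 4 * (cos t ^ (2 * m) - cos t ^ (2 * m.+1))) 0 (PI / 2)
    (4 * (wallis m - wallis m.+1)).
  apply: (is_RInt_scal (V := R_CompleteNormedModule)).
  by apply: (is_RInt_minus (V := R_CompleteNormedModule)); exact: is_RInt_wallis.
rewrite -(is_RInt_unique _ _ _ _ hI).
apply: RInt_le; first by have := PI_RGT_0; lra.
- by exists (wallis2 m); exact: is_RInt_wallis2.
- by exists (4 * (wallis m - wallis m.+1)).
move=> t ht; have hs := sin_ge_half t ltac:(lra).
have hk : 0 <= cos t ^ (2 * m) by rewrite pow_mult; apply: pow_le; apply: pow2_ge_0.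
have hts : t ^ 2 <= 4 * sin t ^ 2 by nra.
have -> : cos t ^ (2 * m.+1) = cos t ^ 2 * cos t ^ (2 * m).
  by rewrite -pow_add mulnS.
have -> : cos t ^ 2 = 1 - sin t ^ 2 by have := sin2_cos2 t; rewrite /Rsqr /=; lra.
nra.
Qed.

Definition basel_remainder (m : nat) : R := 2 * wallis2 m / wallis m.

Lemma basel_remainder0 : basel_remainder 0 = zeta2.
Proof. rewrite /basel_remainder /zeta2 wallis0 wallis2_0; field; exact: PI_neq0. Qed.

Lemma basel_remainderS m :
  basel_remainder m = basel_remainder m.+1 + / INR m.+1 ^ 2.
Proof.
rewrite /basel_remainder.
have hB := wallis2S m; have hA := wallis_gt0 m; have hm := pos_INR m.
rewrite !S_INR in hB *.
have -> : wallis2 m.+1 = ((INR m + 1) * (2 * INR m + 1) * wallis2 m - wallis m.+1)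
                          / (2 * (INR m + 1) ^ 2).
  by rewrite -hB; field; lra.
rewrite wallisS; field; lra.
Qed.

Lemma basel_remainder_bounds m : 0 <= basel_remainder m <= 4 / INR m.+1.
Proof.
rewrite /basel_remainder S_INR.
have hA := wallis_gt0 m; have hB := wallis2_ge0 m; have hm := pos_INR m.
have hBA : wallis2 m <= 2 * wallis m / (INR m + 1).
  by apply: Rle_trans (wallis2_le m) _; rewrite wallisS; apply: Req_le; field; lra.
split; first by apply: Rmult_le_pos; [lra | apply/Rlt_le/Rinv_0_lt_compat].
apply: Rle_trans (_ : _ <= 2 * (2 * wallis m / (INR m + 1)) / wallis m) _.
  by apply: Rmult_le_compat_r; [apply/Rlt_le/Rinv_0_lt_compat | lra].
by apply: Req_le; field; lra.
Qed.
End Basel.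
Import Basel.

Lemma harmonic2_add_basel_remainder n : harmonic2 n + basel_remainder n = zeta2.
Proof.
elim: n => [|n IH]; first by rewrite /harmonic2 partial_sum0 basel_remainder0 Rplus_0_l.
by rewrite /harmonic2 partial_sumS -IH (basel_remainderS n) -/(harmonic2 n); ring.
Qed.

Lemma harmonic2_increment_bounds k j : (0 < k)%N ->
  / INR k.+1 - / INR (k + j).+1 <= harmonic2 (k + j) - harmonic2 k <= / INR k - / INR (k + j).
Proof.
move=> k0; have hk : 1 <= INR k by apply: (le_INR 1); apply/leP.
elim: j => [|j IH]; first by rewrite addn0; lra.
rewrite addnS /harmonic2 partial_sumS -/(harmonic2 (k + j)) -/(harmonic2 k).
have hkj : INR k <= INR (k + j) by apply: le_INR; apply/leP; rewrite leq_addr.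
rewrite !S_INR in IH *; set M := INR (k + j) in IH hkj *.
have lb : / (M + 1) - / (M + 1 + 1) <= / (M + 1) ^ 2.
  have -> : / (M + 1) - / (M + 1 + 1) = / ((M + 1) * (M + 2)) by field; lra.
  by apply: Rinv_le_contravar; nra.
have ub : / (M + 1) ^ 2 <= / M - / (M + 1).
  have -> : / M - / (M + 1) = / (M * (M + 1)) by field; lra.
  by apply: Rinv_le_contravar; nra.
lra.
Qed.

Lemma zeta2_sub_harmonic2_bounds k : (0 < k)%N ->
  / INR k.+1 <= zeta2 - harmonic2 k <= / INR k.
Proof.
move=> k0; rewrite -(harmonic2_add_basel_remainder k) Rplus_minus_l.
have key j : / INR k.+1 <= basel_remainder k + 1 / INR (k + j).+1
             /\ basel_remainder k <= / INR k + 4 / INR (k + j).+1.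
  have [lb ub] := harmonic2_increment_bounds k j k0.
  have := harmonic2_add_basel_remainder k; have := harmonic2_add_basel_remainder (k + j).
  have [r0 r1] := basel_remainder_bounds (k + j).
  have : 0 <= / INR (k + j) by apply/Rlt_le/Rinv_0_lt_compat/lt_0_INR/ltP; rewrite addn_gt0 k0.
  rewrite /Rdiv Rmult_1_l; split; lra.
split.
- by apply: (Rle_of_forall_le_add_div _ _ 1 k) => j; have [] := key j.
- by apply: (Rle_of_forall_le_add_div _ _ 4 k) => j; have [] := key j.
Qed.

Definition squarefree (n : nat) : bool :=
  (0 < n)%N && all (fun p => ~~ (p * p %| n))%N (primes n).

Definition moebius (n : nat) : R := if squarefree n then (-1) ^ size (primes n) else 0.

Lemma moebius1 : moebius 1 = 1.
Proof. by rewrite /moebius /=. Qed.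

Lemma moebius_abs_le1 n : Rabs (moebius n) <= 1.
Proof.
rewrite /moebius; case: (squarefree n); last by rewrite Rabs_R0; lra.
by rewrite -RPow_abs Rabs_Ropp Rabs_R1 pow1; lra.
Qed.

Lemma moebius_sq_dvd p d : prime p -> (p * p %| d)%N -> moebius d = 0.
Proof.
move=> pp hd; rewrite /moebius /squarefree.
case: (posnP d) => [-> //|d0] /=.
suff /negbTE -> : ~~ all (fun q => ~~ (q * q %| d))%N (primes d) by [].
apply/allPn; exists p; last by rewrite negbK.
by rewrite mem_primes pp d0 (dvdn_trans (dvdn_mulr p (dvdnn p)) hd).
Qed.

Lemma moebius_mul_prime p d : prime p -> ~~ (p %| d)%N -> (0 < d)%N ->
  moebius (p * d) = - moebius d.
Proof.
move=> pp npd d0.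
have hperm : perm_eq (primes (p * d)) (p :: primes d).
  apply: uniq_perm; first exact: primes_uniq.
    by rewrite /= primes_uniq andbT mem_primes pp d0.
  by move=> q; rewrite (primesM _ (prime_gt0 pp) d0) (primes_prime pp) !inE.
rewrite /moebius /squarefree (perm_size hperm) (perm_all _ hperm) /=.
rewrite muln_gt0 prime_gt0 // d0 dvdn_pmul2l ?prime_gt0 //.
have -> : all (fun q => ~~ (q * q %| p * d))%N (primes d)
        = all (fun q => ~~ (q * q %| d))%N (primes d).
  apply: eq_in_all => q; rewrite mem_primes => /and3P [qp _ qd].
  have qp' : q != p by apply: contraNneq npd => <-.
  rewrite Gauss_dvdr // coprimeMl andbb prime_coprime //.
  by rewrite dvdn_prime2 // eq_sym.
by rewrite npd; case: (all _ _) => /=; lra.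
Qed.

Definition divisor_sum (n : nat) (F : nat -> R) : R := \big[Rplus/0]_(d <- divisors n) F d.

Lemma dvdn_pfactor_mul_coprime p a m d : prime p -> ~~ (p %| d)%N ->
  (d %| p ^ a * m)%N = (d %| m)%N.
Proof. by move=> pp npd; rewrite Gauss_dvdr // coprimeXr // coprime_sym prime_coprime. Qed.

Lemma perm_divisors_pfactor_mul p a m : prime p -> (0 < a)%N -> (0 < m)%N -> ~~ (p %| m)%N ->
  perm_eq [seq d <- divisors (p ^ a * m) | ~~ (p * p %| d)%N]
          (divisors m ++ map (muln p) (divisors m)).
Proof.
move=> pp a0 m0 npm; have p0 := prime_gt0 pp.
have n0 : (0 < p ^ a * m)%N by rewrite muln_gt0 expn_gt0 p0 m0.
have hpa : (p ^ a = p * p ^ a.-1)%N by rewrite -expnS prednK.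
have npdvd e : (e %| m)%N -> ~~ (p %| e)%N.
  by move=> em; apply: contraNN npm => /dvdn_trans; apply.
apply: uniq_perm.
- by rewrite filter_uniq // divisors_uniq.
- have pinj : injective (muln p) by move=> x y /eqP; rewrite eqn_pmul2l // => /eqP.
  rewrite cat_uniq divisors_uniq (map_inj_uniq pinj) divisors_uniq /= andbT.
  apply/hasPn => _ /mapP [e em ->]; rewrite -!dvdn_divisors // in em *.
  by apply: contraNN npm; apply: dvdn_trans (dvdn_mulr e (dvdnn p)).
move=> d; rewrite mem_filter mem_cat -!dvdn_divisors //; apply/andP/orP.
- case=> npp dn; case hpd : (p %| d)%N; last by left; rewrite -(dvdn_pfactor_mul_coprime p a) ?hpd.
  move: hpd npp dn => /dvdnP [e ->] npp; rewrite mulnC => dn.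
  right; apply/mapP; exists e => //; rewrite -dvdn_divisors //.
  have npe : ~~ (p %| e)%N by apply: contraNN npp; rewrite mulnC dvdn_pmul2l.
  by move: dn; rewrite hpa -mulnA dvdn_pmul2l // dvdn_pfactor_mul_coprime.
- case=> [dm | /mapP [e em ->]].
    split; last by rewrite dvdn_mull.
    by apply: contraNN (npdvd d dm); apply: dvdn_trans (dvdn_mulr p (dvdnn p)).
  rewrite -dvdn_divisors // in em; split; first by rewrite dvdn_pmul2l // npdvd.
  by rewrite hpa -mulnA dvdn_pmul2l // dvdn_mull.
Qed.

Lemma divisor_sum_pfactor_mul p a m F : prime p -> (0 < a)%N -> (0 < m)%N -> ~~ (p %| m)%N ->
  (forall d, (p * p %| d)%N -> F d = 0) ->
  divisor_sum (p ^ a * m) F = divisor_sum m F + divisor_sum m (fun d => F (p * d)%N).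
Proof.
move=> pp a0 m0 npm hF; rewrite /divisor_sum.
rewrite (bigID (fun d => p * p %| d)%N) /= big1 ?Rplus_0_l => [|d /hF //].
by rewrite -big_filter (perm_big _ (perm_divisors_pfactor_mul _ _ _ pp a0 m0 npm)) big_cat big_map.
Qed.

Lemma pfactor_coprime_decomposition n : (1 < n)%N ->
  exists p a m, [/\ prime p, (0 < a)%N, ~~ (p %| m)%N, n = (p ^ a * m)%N & (0 < m < n)%N].
Proof.
move=> n1; have n0 : (0 < n)%N by apply: ltnW.
have pp := pdiv_prime n1.
have [m cpm hn] := pfactor_coprime pp n0.
have a0 : (0 < logn (pdiv n) n)%N by rewrite logn_gt0 mem_primes pp n0 pdiv_dvd.
have m0 : (0 < m)%N by move: n0; rewrite hn muln_gt0 => /andP [].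
exists (pdiv n), (logn (pdiv n) n), m; split => //; first by rewrite -prime_coprime.
  by rewrite mulnC.
by rewrite m0 /= [X in (m < X)%N]hn ltn_Pmulr // -(expn0 (pdiv n)) ltn_exp2l ?prime_gt1.
Qed.

Lemma divisor_sum_moebius_mul_pfactor p a m (g : nat -> R) :
  prime p -> (0 < a)%N -> (0 < m)%N -> ~~ (p %| m)%N ->
  (forall d, g (p * d)%N = g p * g d) ->
  divisor_sum (p ^ a * m) (fun d => moebius d * g d)
  = (1 - g p) * divisor_sum m (fun d => moebius d * g d).
Proof.
move=> pp a0 m0 npm gM.
rewrite divisor_sum_pfactor_mul // => [|d /(moebius_sq_dvd _ _ pp) ->]; last exact: Rmult_0_l.
rewrite Rmult_minus_distr_r Rmult_1_l /divisor_sum big_distrr /=.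
rewrite [X in _ + X = _](eq_big_seq (fun d => - (g p * (moebius d * g d)))) /=.
  by rewrite -(big_morph Ropp Ropp_plus_distr Ropp_0); ring.
move=> d; rewrite -dvdn_divisors // => dm.
rewrite moebius_mul_prime ?(dvdn_gt0 m0) // ?gM; first ring.
by apply: contraNN npm => /dvdn_trans; apply.
Qed.

Lemma divisor_sum_moebius n : (1 < n)%N -> divisor_sum n moebius = 0.
Proof.
move=> /pfactor_coprime_decomposition [p [a [m [pp a0 npm -> /andP [m0 _]]]]].
have h := divisor_sum_moebius_mul_pfactor p a m (fun _ => 1) pp a0 m0 npm (fun _ => esym (Rmult_1_l 1)).
rewrite /divisor_sum in h *; rewrite (eq_bigr _ (fun d _ => esym (Rmult_1_r (moebius d)))) h.
ring.
Qed.

Lemma divisor_sum_moebius_div n : (0 < n)%N ->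
  divisor_sum n (fun d => moebius d / INR d) = INR (totient n) / INR n.
Proof.
elim/ltn_ind: n => n IH n0; case: (ltngtP n 1) => [|n1|->].
- by rewrite ltnS leqn0 => /eqP n00; move: n0; rewrite n00.
- have [p [a [m [pp a0 npm hn /andP [m0 mn]]]]] := pfactor_coprime_decomposition n n1.
  have hp := INR_gt0 _ (prime_gt0 pp); have hm := INR_gt0 _ m0.
  have hpa : 0 < INR (p ^ a.-1) by apply: INR_gt0; rewrite expn_gt0 prime_gt0.
  rewrite hn (divisor_sum_moebius_mul_pfactor p a m (fun d => / INR d)) // ?IH //; last first.
    by move=> d; rewrite mult_INR Rinv_mult.
  rewrite totient_coprime ?coprimeXl ?prime_coprime // totient_pfactor //.
  rewrite -(prednK a0) expnS !mult_INR -subn1 minus_INR; last exact/leP/prime_gt0.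
  by rewrite /=; field; lra.
- by rewrite /divisor_sum big_seq1 moebius1.
Qed.

Lemma divisor_sum_partial_sum n G : (0 < n)%N ->
  divisor_sum n G = partial_sum (fun d => if (d %| n)%N then G d else 0) n.
Proof.
move=> n0; rewrite /partial_sum -big_mkcond -big_filter /divisor_sum; apply: perm_big.
apply: uniq_perm; [exact: divisors_uniq | by rewrite filter_uniq // iota_uniq |].
move=> d; rewrite mem_filter -dvdn_divisors // mem_index_iota ltnS.
by apply/idP/idP => [hd | /andP [] //]; rewrite hd (dvdn_gt0 n0 hd) dvdn_leq.
Qed.

Lemma partial_sum_divisor_sum (a b : nat -> R) N :
  partial_sum (fun n => divisor_sum n (fun d => a d * b (n %/ d)%N)) N
  = partial_sum (fun d => a d * partial_sum b (N %/ d)) N.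
Proof.
elim: N => [|N IH]; first by rewrite !partial_sum0.
rewrite partial_sumS IH divisor_sum_partial_sum //.
have -> : partial_sum (fun d => a d * partial_sum b (N %/ d)) N
        = partial_sum (fun d => a d * partial_sum b (N %/ d)) N.+1.
  by rewrite partial_sumS divn_small // partial_sum0 Rmult_0_r Rplus_0_r.
rewrite /partial_sum -big_split /=.
apply: eq_big_nat => d /andP [d1 _]; rewrite divnS //.
case: (d %| N.+1)%N => /=; last by rewrite add0n; ring.
by rewrite add1n [in RHS]big_nat_recr //=; ring.
Qed.

Lemma phi_over_n_sum_partial_sum N :
  phi_over_n_sum N = partial_sum (fun n => INR (totient n) / INR n) N.
Proof. by elim: N => [|N IH]; rewrite ?partial_sum0 // partial_sumS -IH. Qed.

Lemma phi_over_n_sum_moebius N :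
  phi_over_n_sum N = partial_sum (fun d => moebius d / INR d * INR (N %/ d)) N.
Proof.
have const1 k : partial_sum (fun _ => 1) k = INR k.
  by elim: k => [|k IH]; rewrite ?partial_sum0 // partial_sumS IH S_INR.
transitivity (partial_sum (fun d => moebius d / INR d * partial_sum (fun _ => 1) (N %/ d)) N).
  rewrite phi_over_n_sum_partial_sum -partial_sum_divisor_sum /partial_sum.
  apply: eq_big_nat => n /andP [n0 _]; rewrite -divisor_sum_moebius_div //.
  by apply: eq_bigr => d _; ring.
by apply: eq_bigr => d _; rewrite const1.
Qed.

Lemma moebius_harmonic2 N : (0 < N)%N ->
  partial_sum (fun d => moebius d / INR d ^ 2 * harmonic2 (N %/ d)) N = 1.
Proof.
move=> N0; rewrite -partial_sum_divisor_sum /partial_sum big_ltn // divisor_sum_partial_sum //.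
rewrite /partial_sum big_nat1 moebius1 divn1 /= big1_seq => [|n]; first by field.
move=> /andP [_]; rewrite mem_index_iota => /andP [n1 _]; have n0 := ltnW n1.
rewrite /divisor_sum (eq_big_seq (fun d => / INR n ^ 2 * moebius d)) => [|d].
  by rewrite -big_distrr /= -/(divisor_sum n moebius) divisor_sum_moebius // Rmult_0_r.
rewrite -dvdn_divisors // => dn.
have d0 := dvdn_gt0 n0 dn; have q0 : (0 < n %/ d)%N by rewrite divn_gt0 // dvdn_leq.
have hd := INR_gt0 _ d0; have hq := INR_gt0 _ q0.
by rewrite -{3}(divnK dn) mult_INR; field; lra.
Qed.

Lemma Rabs_partial_sum_sub_le (F G B : nat -> R) N :
  (forall d, (0 < d <= N)%N -> Rabs (F d - G d) <= B d) ->
  Rabs (partial_sum F N - partial_sum G N) <= partial_sum B N.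
Proof.
elim: N => [|N IH] h; first by rewrite !partial_sum0 Rminus_0_r Rabs_R0; right.
rewrite !partial_sumS.
have -> : partial_sum F N + F N.+1 - (partial_sum G N + G N.+1)
        = (partial_sum F N - partial_sum G N) + (F N.+1 - G N.+1) by ring.
apply: Rle_trans (Rabs_triang _ _) _; apply: Rplus_le_compat; last by apply: h; rewrite /= leqnn.
by apply: IH => d /andP [d0 dN]; apply: h; rewrite d0 leqW.
Qed.

Lemma partial_sum_scale c F N : c * partial_sum F N = partial_sum (fun d => c * F d) N.
Proof. exact: big_distrr. Qed.

Lemma floor_correction_bound c y k e : / 2 <= c <= 1 -> 1 <= k -> k <= y < k + 1 ->
  / (k + 1) <= e <= / k -> Rabs (k - y + c * y * e) <= c.
Proof.
move=> hc hk hy he.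
have ub : c * y * e <= c + (y - k) * (c / k - 1) + y - k.
  have -> : c + (y - k) * (c / k - 1) + y - k = c * y * / k by field; lra.
  by apply: Rmult_le_compat_l; [nra | lra].
have lb : c - 1 + (k + 1 - y) * (1 - c / (k + 1)) + y - k <= c * y * e.
  have -> : c - 1 + (k + 1 - y) * (1 - c / (k + 1)) + y - k = c * y * / (k + 1) by field; lra.
  by apply: Rmult_le_compat_l; [nra | lra].
have : c / k <= 1 by apply: (Rmult_le_reg_r k); [lra | rewrite /Rdiv Rmult_assoc Rinv_l; lra].
have : c / (k + 1) <= 1.
  by apply: (Rmult_le_reg_r (k + 1)); [lra | rewrite /Rdiv Rmult_assoc Rinv_l; lra].
move=> c1 c2; apply: Rabs_le; nra.
Qed.

Lemma inv_zeta2_bounds : 0.6078 <= / zeta2 <= 0.6080.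
Proof.
have [h1 h2] := PI_bounds.
have hz : 9.869 <= zeta2 * 6 <= 9.8703 by rewrite /zeta2; split; simpl; nra.
have z0 : 0 < zeta2 by lra.
split; apply: (Rmult_le_reg_r zeta2) => //; rewrite Rinv_l; lra.
Qed.

Lemma floor_div_bounds N d x : (0 < d <= N)%N -> INR N <= x < INR N + 1 ->
  [/\ 1 <= INR (N %/ d), INR (N %/ d) <= x / INR d & x / INR d < INR (N %/ d) + 1].
Proof.
move=> /andP [d0 dN] hx; have hd := INR_gt0 _ d0.
have hdiv y : y / INR d * INR d = y by field; lra.
split.
- by apply: (le_INR 1); apply/leP; rewrite divn_gt0.
- apply: (Rmult_le_reg_r (INR d)) => //; rewrite hdiv -mult_INR.
  by apply: Rle_trans hx.1; apply/le_INR/leP; exact: leq_divM.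
- apply: (Rmult_lt_reg_r (INR d)) => //; rewrite hdiv; apply: Rlt_le_trans hx.2 _.
  by rewrite -!S_INR -mult_INR; apply/le_INR/leP; exact: ltn_ceil.
Qed.

Lemma phi_over_n_sum_error N x : (0 < N)%N -> INR N <= x < INR N + 1 ->
  Rabs (phi_over_n_sum N - x / zeta2) <= / zeta2 * harmonic N.
Proof.
move=> N0 hx; have [c1 c2] := inv_zeta2_bounds.
have z0 : zeta2 <> 0 by move=> z0; move: c1; rewrite z0 Rinv_0; lra.
rewrite -[x / zeta2]Rmult_1_r -(moebius_harmonic2 N N0) phi_over_n_sum_moebius.
rewrite /harmonic !partial_sum_scale; apply: Rabs_partial_sum_sub_le => d hdN.
have hd : 0 < INR d by apply: INR_gt0; case/andP: hdN.
have [k1 ky yk] := floor_div_bounds N d x hdN hx.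
set k := (N %/ d)%N in k1 ky yk *.
have kn : (0 < k)%N by apply/ltP/INR_lt; rewrite /=; lra.
have [e1 e2] := zeta2_sub_harmonic2_bounds k kn.
have -> : moebius d / INR d * INR k - x / zeta2 * (moebius d / INR d ^ 2 * harmonic2 k)
    = moebius d / INR d
      * (INR k - x / INR d + / zeta2 * (x / INR d) * (zeta2 - harmonic2 k)) by field; lra.
have hg := floor_correction_bound (/ zeta2) (x / INR d) (INR k) (zeta2 - harmonic2 k)
  ltac:(lra) k1 (conj ky yk) ltac:(rewrite -S_INR; lra).
set g := INR k - x / INR d + _ in hg *.
have hmug : Rabs (moebius d) * Rabs g <= / zeta2.
  by have := moebius_abs_le1 d; have := Rabs_pos (moebius d); have := Rabs_pos g; nra.
rewrite Rabs_mult /Rdiv Rabs_mult Rabs_inv (Rabs_right (INR d)); last lra.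
rewrite Rmult_assoc (Rmult_comm (/ INR d)) -Rmult_assoc.
by apply: Rmult_le_compat_r => //; apply/Rlt_le/Rinv_0_lt_compat.
Qed.

Lemma ln_ge_1_sub_inv y : 0 < y -> 1 - / y <= ln y.
Proof.
move=> y0; have := exp_ineq1_le (- ln y).
by rewrite exp_Ropp exp_ln //; lra.
Qed.

Lemma harmonic_le_1_add_ln N : (0 < N)%N -> harmonic N <= 1 + ln (INR N).
Proof.
elim: N => [//|N IH] _; case: (posnP N) => [->|N0].
  by rewrite /harmonic partial_sumS partial_sum0 /= ln_1; lra.
have hN := INR_gt0 _ N0; rewrite /harmonic partial_sumS -/(harmonic N).
have hNS : 0 < INR N.+1 / INR N by rewrite S_INR; apply: Rdiv_lt_0_compat; lra.
have -> : ln (INR N.+1) = ln (INR N) + ln (INR N.+1 / INR N).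
  by rewrite -ln_mult //; congr ln; field; lra.
have := ln_ge_1_sub_inv _ hNS; have := IH N0.
have -> : / (INR N.+1 / INR N) = 1 - / INR N.+1 by rewrite S_INR; field; lra.
lra.
Qed.

Lemma harmonic_lb N : (7 <= N)%N -> 363 / 140 <= harmonic N.
Proof.
elim: N => [//|N IH]; rewrite leq_eqVlt => /orP [/eqP <-|N7].
  by rewrite /harmonic /partial_sum /index_iota /= !big_cons big_nil /=; lra.
rewrite /harmonic partial_sumS -/(harmonic N).
have := IH N7; have : 0 < / INR N.+1 by apply/Rinv_0_lt_compat/INR_gt0.
lra.
Qed.

Lemma phi_over_n_sum_bounds_large N x : (7 <= N)%N -> INR N <= x < INR N + 1 ->
  x / zeta2 - ln x <= phi_over_n_sum N <= x / zeta2 + ln x.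
Proof.
move=> N7 hx; have N0 : (0 < N)%N by apply: leq_trans N7.
have hN := INR_gt0 _ N0; have [c1 c2] := inv_zeta2_bounds.
have hln := Rcomplements.ln_le _ _ hN hx.1.
have herr := phi_over_n_sum_error N x N0 hx.
have hu := harmonic_le_1_add_ln N N0; have hl := harmonic_lb N N7.
have : / zeta2 * harmonic N <= harmonic N - 1 by nra.
have := Rle_abs (phi_over_n_sum N - x / zeta2).
have := Rle_abs (- (phi_over_n_sum N - x / zeta2)); rewrite Rabs_Ropp.
lra.
Qed.

Lemma phi_over_n_sum_bounds_small N x : (2 <= N < 7)%N -> INR N <= x < INR N + 1 ->
  x / zeta2 - ln x <= phi_over_n_sum N <= x / zeta2 + ln x.
Proof.
move=> /andP [N2 N7] hx; have hN : 0 < INR N by apply: INR_gt0; apply: ltn_trans N2.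
have [c1 c2] := inv_zeta2_bounds.
have hxz : INR N * 0.6078 <= x / zeta2 <= (INR N + 1) * 0.608 by rewrite /Rdiv; split; nra.
have := Rle_trans _ _ _ (ln_ge_1_sub_inv _ hN) (Rcomplements.ln_le _ _ hN hx.1).
(* [ln x >= 1 - 1/N] suffices once S(N) is evaluated for each N. *)
move: N2 N7 hx hxz hN.
by case: N => [|[|[|[|[|[|[|N]]]]]]] //= _ _ *; lra.
Qed.

Lemma nat_floor_spec x : 2 <= x ->
  (2 <= nat_floor x)%N /\ INR (nat_floor x) <= x < INR (nat_floor x) + 1.
Proof.
move=> hx; have [b1 b2] := base_Int_part x.
have z0 : (0 <= Int_part x)%Z by apply: le_IZR; lra.
have e : INR (nat_floor x) = IZR (Int_part x) by rewrite /nat_floor INR_IZR_INZ Z2Nat.id.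
rewrite e; split; last lra.
by apply/ltP/INR_lt; rewrite e /=; lra.
Qed.

Theorem lemma2p2 (x : R) (hx : 2 <= x) :
  x / zeta2 - ln x <= sum_phi_over_n x <= x / zeta2 + ln x.
Proof.
have [N2 hN] := nat_floor_spec x hx.
rewrite /sum_phi_over_n; case: (leqP 7 (nat_floor x)) => N7.
- exact: phi_over_n_sum_bounds_large.
- by apply: phi_over_n_sum_bounds_small; rewrite ?N2.
Qed.
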